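(* Let $A$ be the $2$-pole obtained from the Petersen graph by cutting one edge into a pair of dangling edges. Then: (a) every perfect matching of $A$ contains either both dangling edges or neither of them; (b) if $M_1, M_2, M_3$ are perfect matchings of $A$ none of which contains a dangling edge, then at least $2$ links of $A$ are not covered by $M_1\cup M_2\cup M_3$, and for a suitable such triple exactly $2$ links are uncovered; (c) if $M_1, M_2, M_3$ are perfect matchings of $A$ one of which contains a dangling edge, then at least $3$ links of $A$ are not covered by $M_1\cup M_2\cup M_3$, and for a suitable such triple exactly $3$ links are uncovered.
   Context: A multipole is a cubic ''graph with dangling edges'': each edge is either a link (joining two vertices) or a dangling edge (with only one end incident with a vertex). Cutting an edge $uv$ into a pair of dangling edges means deleting $uv$ and attaching one new dangling edge to $u$ and one to $v$. A perfect matching of a multipole is a set of links and dangling edges such that every vertex is incident with exactly one of them. *)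

From mathcomp Require Import all_boot.
Set Implicit Arguments. Unset Strict Implicit. Unset Printing Implicit Defensive.

(* Petersen graph on vertices 0..9: outer 5-cycle 0-1-2-3-4-0, spokes i-(i+5),
   inner pentagram 5-7-9-6-8-5.  Edges are listed as pairs (u,v) with u < v. *)
Definition petersen_edges : seq (nat * nat) :=
  [:: (0,1); (1,2); (2,3); (3,4); (0,4);
      (0,5); (1,6); (2,7); (3,8); (4,9);
      (5,7); (7,9); (6,9); (6,8); (5,8)].

Definition cut_edge : nat * nat := (0,1).

(* Edges of a multipole on vertex set 'I_10: a link is an ordered pair (u,v)
   with u < v; a dangling edge is indexed by a bool. *)
Definition medge := (('I_10 * 'I_10) + bool)%type.

Definition A_links : {set medge} :=
  [set e : medge | if e is inl (u, v) then
      ((val u, val v) \in petersen_edges) && ((val u, val v) != cut_edge)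
    else false].

(* Dangling edges of A: dangling false is attached to vertex 0,
   dangling true to vertex 1 (the ends of the cut edge). *)
Definition dangle_end (b : bool) : nat := if b then 1 else 0.

Definition A_dangling : {set medge} := [set e : medge | if e is inr _ then true else false].

Definition A_edges : {set medge} := A_links :|: A_dangling.

Definition incident (e : medge) (x : 'I_10) : bool :=
  match e with
  | inl (u, v) => (x == u) || (x == v)
  | inr b => val x == dangle_end b
  end.

Definition perfect_matching (M : {set medge}) : Prop :=
  M \subset A_edges /\ forall x : 'I_10, #|[set e in M | incident e x]| = 1.

Definition has_dangling (M : {set medge}) : bool := [exists e in M, e \in A_dangling].

Definition uncovered (M1 M2 M3 : {set medge}) : nat :=
  #|A_links :\: (M1 :|: M2 :|: M3)|.

Definition dangle0 : medge := inr false.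
Definition dangle1 : medge := inr true.

(* A perfect matching of A is a set of its 16 edges, so the claims can be
   decided by enumerating the 2^16 subsets.  Exactly six of them are perfect
   matchings: the six perfect matchings of the Petersen graph, where the cut
   edge, when used, is replaced by both dangling edges.  Parts (b) and (c)
   are then checked on all triples of these six. *)

From mathcomp Require Import all_boot.

Set Implicit Arguments.
Unset Strict Implicit.
Unset Printing Implicit Defensive.

Definition all3 (T : Type) (P : T -> T -> T -> bool) (s : seq T) : bool :=
  all (fun x => all (fun y => all (P x y) s) s) s.

Lemma all3P (T : eqType) (P : T -> T -> T -> bool) (s : seq T) :
  all3 P s -> forall x y z, x \in s -> y \in s -> z \in s -> P x y z.
Proof. by move=> /allP Ps x y z /Ps /allP Pxs /Pxs /allP Pxys /Pxys. Qed.

Section SetsOfSequences.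

Variable T : finType.

Lemma card_set_seq_pred (s : seq T) (p : pred T) :
  uniq s -> #|[set x in [set:: s] | p x]| = count p s.
Proof.
move=> s_uniq; rewrite -size_filter -(card_uniqP (filter_uniq p s_uniq)).
by apply: eq_card => x; rewrite !inE mem_filter andbC.
Qed.

Lemma set_seq_mask (M : {set T}) (s : seq T) :
  {subset M <= s} -> M = [set:: mask [seq x \in M | x <- s] s].
Proof.
move=> sub_M_s; apply/setP => x; rewrite inE -filter_mask mem_filter /=.
by case: (boolP (x \in M)) => [/sub_M_s ->|].
Qed.

End SetsOfSequences.

Fixpoint masks (n : nat) : seq bitseq :=
  if n is n'.+1 then [seq b :: m | b <- [:: false; true], m <- masks n']
  else [:: [::]].

Lemma mem_masks (m : bitseq) : m \in masks (size m).
Proof. by elim: m => [|[] m IHm] //=; rewrite !mem_cat map_f ?orbT. Qed.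

(* [inord] does not reduce under [vm_compute], hence this explicit ordinal. *)
Definition vertex (u : nat) : 'I_10 := Ordinal (ltn_pmod u (isT : 0 < 10)).

Definition vertices : seq 'I_10 := map vertex (iota 0 10).

Lemma mem_vertices (x : 'I_10) : x \in vertices.
Proof.
apply/mapP; exists (val x); first by rewrite mem_iota ltn_ord.
by apply: val_inj; rewrite /= modn_small.
Qed.

Lemma forall_vertex2 (P : 'I_10 -> 'I_10 -> bool) :
  all (fun u => all (P u) vertices) vertices -> forall u v, P u v.
Proof.
move=> /allP P_all u v.
exact: (allP (P_all u (mem_vertices u)) v (mem_vertices v)).
Qed.

Definition link (u v : nat) : medge := inl (vertex u, vertex v).

Definition A_link_seq : seq medge :=
  [:: link 1 2; link 2 3; link 3 4; link 0 4; link 0 5; link 1 6; link 2 7;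
      link 3 8; link 4 9; link 5 7; link 7 9; link 6 9; link 6 8; link 5 8].

Definition A_edge_seq : seq medge := A_link_seq ++ [:: dangle0; dangle1].

Lemma uniq_A_edge_seq : uniq A_edge_seq.
Proof. by vm_compute. Qed.

Lemma mem_A_links (e : medge) : (e \in A_links) = (e \in A_link_seq).
Proof.
rewrite inE; case: e => [[u v]|[]] //; apply/eqP; move: u v.
by apply: forall_vertex2; vm_compute.
Qed.

Lemma mem_A_edges (e : medge) : (e \in A_edges) = (e \in A_edge_seq).
Proof.
rewrite in_setU mem_A_links mem_cat; congr (_ || _).
by rewrite !inE; case: e => [[]|[]].
Qed.

Definition perfect_matching_seq (l : seq medge) : bool :=
  all (fun x => count (incident^~ x) l == 1) vertices.

Definition A_perfect_matchings : seq (seq medge) :=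
  [:: [:: link 0 5; link 1 6; link 2 7; link 3 8; link 4 9];
      [:: link 3 4; link 2 7; link 6 9; link 5 8; dangle0; dangle1];
      [:: link 2 3; link 4 9; link 5 7; link 6 8; dangle0; dangle1];
      [:: link 2 3; link 0 4; link 1 6; link 7 9; link 5 8];
      [:: link 1 2; link 0 4; link 3 8; link 5 7; link 6 9];
      [:: link 1 2; link 3 4; link 0 5; link 7 9; link 6 8]].

Lemma A_perfect_matchings_enum :
  [seq l <- [seq mask m A_edge_seq | m <- masks (size A_edge_seq)]
     | perfect_matching_seq l] = A_perfect_matchings.
Proof. by vm_compute. Qed.

Lemma perfect_matchingP (M : {set medge}) :
  perfect_matching M <-> exists2 l, l \in A_perfect_matchings & M = [set:: l].
Proof.
rewrite -A_perfect_matchings_enum.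
split=> [[/subsetP sub_M_edges deg_M] | [l + ->]].
- have sub_M_seq : {subset M <= A_edge_seq}.
    by move=> e /sub_M_edges; rewrite mem_A_edges.
  have M_mask := set_seq_mask sub_M_seq.
  exists (mask [seq e \in M | e <- A_edge_seq] A_edge_seq) => //.
  rewrite mem_filter; apply/andP; split; last first.
    apply/mapP; exists [seq e \in M | e <- A_edge_seq] => //.
    by rewrite -(size_map (fun e => e \in M)) mem_masks.
  apply/allP => x _; rewrite -card_set_seq_pred ?mask_uniq ?uniq_A_edge_seq //.
  by rewrite -M_mask deg_M.
- rewrite mem_filter => /andP[pm_l /mapP[m _ l_mask]]; subst l.
  split; first by apply/subsetP => e; rewrite inE mem_A_edges; apply: mem_mask.
  move=> x; rewrite card_set_seq_pred ?mask_uniq ?uniq_A_edge_seq //.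
  by move/allP: pm_l => /(_ x (mem_vertices x))/eqP.
Qed.

Definition has_dangling_seq (l : seq medge) : bool :=
  (dangle0 \in l) || (dangle1 \in l).

Definition uncovered_seq (l1 l2 l3 : seq medge) : nat :=
  count [predC l1 ++ l2 ++ l3] A_link_seq.

Lemma has_dangling_set_seq (l : seq medge) :
  has_dangling [set:: l] = has_dangling_seq l.
Proof.
apply/existsP/orP => [[[[u v]|[]]]|[l_d0|l_d1]]; rewrite ?inE.
- by case/andP.
- by case/andP=> l_d1 _; right.
- by case/andP=> l_d0 _; left.
- by exists dangle0; rewrite !inE l_d0.
- by exists dangle1; rewrite !inE l_d1.
Qed.

Lemma uncovered_set_seq (l1 l2 l3 : seq medge) :
  uncovered [set:: l1] [set:: l2] [set:: l3] = uncovered_seq l1 l2 l3.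
Proof.
have uniq_links : uniq A_link_seq.
  by move: uniq_A_edge_seq; rewrite cat_uniq => /andP[].
rewrite /uncovered /uncovered_seq -card_set_seq_pred //.
by apply: eq_card => e; rewrite in_setD mem_A_links !inE !mem_cat andbC -orbA.
Qed.

Lemma A_perfect_matchings_dangling :
  all (fun l => (dangle0 \in l) == (dangle1 \in l)) A_perfect_matchings.
Proof. by vm_compute. Qed.

Lemma uncovered_seq_ge2 :
  all3 (fun l1 l2 l3 =>
          [&& ~~ has_dangling_seq l1, ~~ has_dangling_seq l2
            & ~~ has_dangling_seq l3]
          ==> (2 <= uncovered_seq l1 l2 l3)) A_perfect_matchings.
Proof. by vm_compute. Qed.

Lemma uncovered_seq_ge3 :
  all3 (fun l1 l2 l3 =>
          [|| has_dangling_seq l1, has_dangling_seq l2 | has_dangling_seq l3]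
          ==> (3 <= uncovered_seq l1 l2 l3)) A_perfect_matchings.
Proof. by vm_compute. Qed.

Theorem lemma1 :
  (* (a) *)
  (forall M, perfect_matching M -> (dangle0 \in M) = (dangle1 \in M))
  /\
  (* (b) *)
  ((forall M1 M2 M3, perfect_matching M1 -> perfect_matching M2 -> perfect_matching M3 ->
      ~~ has_dangling M1 -> ~~ has_dangling M2 -> ~~ has_dangling M3 ->
      2 <= uncovered M1 M2 M3)
   /\ exists M1 M2 M3, (perfect_matching M1 /\ perfect_matching M2 /\ perfect_matching M3)
        /\ [&& ~~ has_dangling M1, ~~ has_dangling M2 & ~~ has_dangling M3]
        /\ uncovered M1 M2 M3 = 2)
  /\
  (* (c) *)
  ((forall M1 M2 M3, perfect_matching M1 -> perfect_matching M2 -> perfect_matching M3 ->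
      [|| has_dangling M1, has_dangling M2 | has_dangling M3] ->
      3 <= uncovered M1 M2 M3)
   /\ exists M1 M2 M3, (perfect_matching M1 /\ perfect_matching M2 /\ perfect_matching M3)
        /\ [|| has_dangling M1, has_dangling M2 | has_dangling M3]
        /\ uncovered M1 M2 M3 = 3).
Proof.
pose pm i := [set:: nth [::] A_perfect_matchings i].
have pmP i : i < 6 -> perfect_matching (pm i).
  move=> lt_i6; apply/perfect_matchingP.
  by exists (nth [::] A_perfect_matchings i); rewrite ?mem_nth.
split; [|split; split].
- move=> M /perfect_matchingP[l l_pm ->]; rewrite !inE.
  exact/eqP/(allP A_perfect_matchings_dangling).
- move=> M1 M2 M3 /perfect_matchingP[l1 pm1 ->] /perfect_matchingP[l2 pm2 ->].
  move=> /perfect_matchingP[l3 pm3 ->].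
  rewrite !has_dangling_set_seq uncovered_set_seq.
  move=> nd1 nd2 nd3; apply: (implyP (all3P uncovered_seq_ge2 pm1 pm2 pm3)).
  by rewrite nd1 nd2 nd3.
- exists (pm 3), (pm 4), (pm 0); split; first by split; [|split]; apply: pmP.
  by rewrite !has_dangling_set_seq uncovered_set_seq; vm_compute.
- move=> M1 M2 M3 /perfect_matchingP[l1 pm1 ->] /perfect_matchingP[l2 pm2 ->].
  move=> /perfect_matchingP[l3 pm3 ->].
  rewrite !has_dangling_set_seq uncovered_set_seq.
  exact: (implyP (all3P uncovered_seq_ge3 pm1 pm2 pm3)).
- exists (pm 0), (pm 2), (pm 1); split; first by split; [|split]; apply: pmP.
  by rewrite !has_dangling_set_seq uncovered_set_seq; vm_compute.
Qed.
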